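(* Let $E$ be a finite-dimensional real vector space with basis $(e_i)_{1\le i\le d}$, let $(x_n)_{n\in\mathbb{N}}$ be an $E$-valued sequence and $(T_k)_{k\in\mathbb{N}}$ a strictly increasing sequence in $\mathbb{N}$ with $T_0=0$, $L_k=T_{k+1}-T_k>0$. Let $\tilde\lambda_p(x)=x_{T_p}$ and let $\tilde{\mathcal{E}}^{(p)}(x)$ be the pseudo-excursions defined by $\tilde{\mathcal{E}}^{(p)}(x)_n=x_{T_p+n}-\tilde\lambda_p(x)$ for $0\le n\le L_p$ (and $=o$, a cemetery point, for $n>L_p$). Then for all $n\ge 1$ and $1\le i,j\le d$, $$A^{ij}_{T_n}(x)=\sum_{p=0}^{n-1}A^{ij}_{L_p}\big(\tilde{\mathcal{E}}^{(p)}(x)\big)+A^{ij}_n\big(\tilde\lambda(x)\big).$$ In particular, if $G\subset E$ is a $\Lambda$-periodic subgraph, $(x_n)$ is $G$-valued with $(\pi_0(x_n))_n$ visiting every point of $G_0$ infinitely often, $T_{k+1}=\inf\{n>T_k:\pi_0(x_n)=\pi_0(x_0)\}$, $\lambda_k(x)=\pi_\Lambda(x_{T_k})$ and $\mathcal{E}^{(p)}(x)_n=x_{T_p+n}-\lambda_p(x)$ for $0\le n\le L_p$, then $$A^{ij}_{T_n}(x)=\sum_{p=0}^{n-1}A^{ij}_{L_p}\big(\mathcal{E}^{(p)}(x)\big)+A^{ij}_n\big(\lambda(x)\big).$$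
   Context: For an $E$-valued sequence $(y_n)_n$ (coordinates $y^{(i)}$ in the basis $(e_i)$), its area sequence is the antisymmetric matrix sequence $A_0(y)=A_1(y)=0$ and $A^{ij}_n(y)=\sum_{1\le k<l\le n}\big((\Delta y^{(i)})_k(\Delta y^{(j)})_l-(\Delta y^{(j)})_k(\Delta y^{(i)})_l\big)$ with $(\Delta u)_k=u_k-u_{k-1}$; for a pseudo-excursion, $A_{L_p}$ uses only its first $L_p+1$ values. A $\Lambda$-periodic subgraph: an infinite subset $G\subset E$ of separated points invariant under translation by a lattice $\Lambda$, with $G=\bigsqcup_{\lambda\in\Lambda}(\lambda+G_0)$, $G_0$ finite, and each $y\in G$ uniquely $y=\pi_\Lambda(y)+\pi_0(y)$, $\pi_\Lambda(y)\in\Lambda$, $\pi_0(y)\in G_0$. *)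

(* E = R^d realised as row vectors 'rV[R]_d, with the
   standard basis; coordinate i of v is v 0 i. *)
From HB Require Import structures.
From mathcomp Require Import all_boot all_order all_algebra.
From mathcomp Require Import reals.
Set Implicit Arguments. Unset Strict Implicit. Unset Printing Implicit Defensive.
Import Order.TTheory GRing.Theory Num.Theory.
Local Open Scope ring_scope.

Definition dlt (R : realType) (d : nat) (y : nat -> 'rV[R]_d) (i : 'I_d) (k : nat) : R :=
  y k 0 i - y k.-1 0 i.

Definition area (R : realType) (d : nat) (y : nat -> 'rV[R]_d) (n : nat) (i j : 'I_d) : R :=
  \sum_(1 <= l < n.+1) \sum_(1 <= k < l)
     (dlt y i k * dlt y j l - dlt y j k * dlt y i l).

Definition excL (T : nat -> nat) (p : nat) : nat := (T p.+1 - T p)%N.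

Definition tlam (R : realType) (d : nat) (x : nat -> 'rV[R]_d) (T : nat -> nat) : nat -> 'rV[R]_d :=
  fun p => x (T p).

(* pseudo-excursion tilde E^(p)(x)_n = x_{T_p+n} - x_{T_p}; only the values for
   n <= L_p matter (beyond, the paper uses a cemetery point which never enters
   A_{L_p}). *)
Definition tpexc (R : realType) (d : nat) (x : nat -> 'rV[R]_d) (T : nat -> nat) (p : nat) :
  nat -> 'rV[R]_d := fun n => x (T p + n)%N - x (T p).

Definition is_lattice (R : realType) (d : nat) (Lam : 'rV[R]_d -> Prop) : Prop :=
  exists b : 'M[R]_d, b \in unitmx /\
    forall v, Lam v <-> exists z : 'rV[int]_d, v = map_mx (fun k : int => k%:~R) z *m b.

Definition separated (R : realType) (d : nat) (G : 'rV[R]_d -> Prop) : Prop :=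
  exists delta : R, 0 < delta /\
    forall y y', G y -> G y' -> y <> y' -> exists i : 'I_d, delta <= `|y 0 i - y' 0 i|.

Definition periodic_subgraph (R : realType) (d : nat) (G : 'rV[R]_d -> Prop)
  (Lam : 'rV[R]_d -> Prop) (G0 : seq 'rV[R]_d)
  (piL pi0 : 'rV[R]_d -> 'rV[R]_d) : Prop :=
  is_lattice Lam /\
      ~ (exists s : seq 'rV[R]_d, forall y, G y -> y \in s) /\
      separated G /\
      (forall l y, Lam l -> G y -> G (l + y)) /\
      (forall y, G y <-> exists l g, [/\ Lam l, g \in G0 & y = l + g]) /\
      (forall l l' g g', Lam l -> Lam l' -> g \in G0 -> g' \in G0 ->
          l + g = l' + g' -> l = l' /\ g = g') /\
      (forall y, G y -> [/\ Lam (piL y), pi0 y \in G0 & y = piL y + pi0 y]).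

(* The area is additive along a concatenation of paths up to the cross term
   formed by the two displacements: splitting x at T_n, the path up to T_{n+1}
   contributes the area up to T_n, the area of the n-th excursion, and the
   cross term of the displacements x_{T_n} - x_0 and x_{T_{n+1}} - x_{T_n},
   which is exactly the last increment of the area of the skeleton
   (x_{T_p})_p.  Areas only depend on increments, so translating the
   excursions and the skeleton by any constant changes nothing; in the
   periodic case lambda_p = x_{T_p} - pi_0(x_0). *)
From HB Require Import structures.
From mathcomp Require Import all_boot all_order all_algebra.
From mathcomp Require Import reals.
From mathcomp Require Import ring.
Import Order.TTheory GRing.Theory Num.Theory.
Local Open Scope ring_scope.

Section Area.
Variables (R : realType) (d : nat).
Implicit Types (y z : nat -> 'rV[R]_d) (c : 'rV[R]_d).

Definition shift y (m : nat) : nat -> 'rV[R]_d := fun n => y (m + n)%N.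

Lemma sum_dlt y i m : \sum_(1 <= k < m.+1) dlt y i k = y m 0 i - y 0%N 0 i.
Proof.
elim: m => [|m IHm]; first by rewrite big_geq // subrr.
by rewrite big_nat_recr //= IHm /dlt /=; ring.
Qed.

Lemma dlt_subr y c i k : dlt (fun n => y n - c) i k = dlt y i k.
Proof. by rewrite /dlt !mxE; ring. Qed.

Lemma eq_area_dlt y z n i j : (forall i k, dlt y i k = dlt z i k) ->
  area y n i j = area z n i j.
Proof.
by move=> eq_yz; apply: eq_bigr => l _; apply: eq_bigr => k _; rewrite !eq_yz.
Qed.

Lemma area_subr y c n i j : area (fun m => y m - c) n i j = area y n i j.
Proof. exact/eq_area_dlt/dlt_subr. Qed.

Lemma area0 y i j : area y 0 i j = 0.
Proof. by rewrite /area big_geq. Qed.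

Lemma areaS y n i j : area y n.+1 i j =
  area y n i j + (y n 0 i - y 0%N 0 i) * dlt y j n.+1
               - (y n 0 j - y 0%N 0 j) * dlt y i n.+1.
Proof.
rewrite /area big_nat_recr //= big_split /= sumrN -!mulr_suml !sum_dlt.
by rewrite addrA.
Qed.

Lemma area_cat y m L i j : area y (m + L) i j =
  area y m i j + area (shift y m) L i j
  + (y m 0 i - y 0%N 0 i) * (y (m + L)%N 0 j - y m 0 j)
  - (y m 0 j - y 0%N 0 j) * (y (m + L)%N 0 i - y m 0 i).
Proof.
elim: L => [|L IHL]; first by rewrite addn0 area0 !subrr; ring.
by rewrite addnS !areaS IHL /shift /dlt /= addn0 addnS /=; ring.
Qed.

Lemma area_decomposition y (T : nat -> nat) n i j :
  T 0%N = 0%N -> (forall k, (T k <= T k.+1)%N) ->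
  area y (T n) i j =
    \sum_(p < n) area (shift y (T p)) (excL T p) i j
    + area (fun p => y (T p)) n i j.
Proof.
move=> T0 T_incr; elim: n => [|n IHn]; first by rewrite T0 big_ord0 !area0 add0r.
have T_S : T n.+1 = (T n + excL T n)%N by rewrite /excL subnKC.
rewrite [in LHS]T_S area_cat IHn big_ord_recr /= areaS -T_S /dlt /= T0; ring.
Qed.

End Area.

Theorem mainTheorem5 (R : realType) (d : nat) :
  (* general decomposition along an arbitrary increasing time sequence *)
  (forall (x : nat -> 'rV[R]_d) (T : nat -> nat),
      T 0%N = 0%N -> (forall k, (T k < T k.+1)%N) ->
      forall (n : nat) (i j : 'I_d), (1 <= n)%N ->
        area x (T n) i j =
          \sum_(p < n) area (tpexc x T p) (excL T p) i j + area (tlam x T) n i j)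
  /\
  (* the periodic-subgraph case *)
  (forall (G Lam : 'rV[R]_d -> Prop) (G0 : seq 'rV[R]_d) (piL pi0 : 'rV[R]_d -> 'rV[R]_d)
          (x : nat -> 'rV[R]_d) (T : nat -> nat),
      periodic_subgraph G Lam G0 piL pi0 ->
      (forall m, G (x m)) ->
      (forall g, g \in G0 -> forall N, exists m, (N <= m)%N /\ pi0 (x m) = g) ->
      (* T_0 = 0, T_{k+1} = inf {m > T_k : pi0 (x m) = pi0 (x 0)} *)
      T 0%N = 0%N ->
      (forall k, (T k < T k.+1)%N /\ pi0 (x (T k.+1)) = pi0 (x 0%N) /\
                 forall m, (T k < m < T k.+1)%N -> pi0 (x m) <> pi0 (x 0%N)) ->
      let lam := fun p => piL (x (T p)) in
      let exc := fun p m => x (T p + m)%N - lam p in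
      forall (n : nat) (i j : 'I_d), (1 <= n)%N ->
        area x (T n) i j =
          \sum_(p < n) area (exc p) (excL T p) i j + area lam n i j).
Proof.
split=> [x T T0 T_incr n i j _ | G Lam G0 piL pi0 x T].
  rewrite area_decomposition //; last by move=> k; exact: ltnW.
  by congr (_ + _); apply: eq_bigr => p _; rewrite /tpexc area_subr.
move=> [_ [_ [_ [_ [_ [_ proj_decomp]]]]]] x_in_G _ T0 T_return lam exc n i j _.
have lamE k : lam k = x (T k) - pi0 (x 0%N).
  have pi0_T : pi0 (x (T k)) = pi0 (x 0%N).
    by case: k => [|k]; [rewrite T0 | case: (T_return k) => _ []].
  have [_ _ x_split] := proj_decomp _ (x_in_G (T k)).
  by rewrite /lam -pi0_T {2}x_split addrK.
rewrite area_decomposition //; last by move=> k; case: (T_return k) => /ltnW.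
have -> : area lam n i j = area (fun p => x (T p)) n i j.
  by apply: eq_area_dlt => i' k; rewrite /dlt !lamE !mxE; ring.
by congr (_ + _); apply: eq_bigr => p _; rewrite /exc area_subr.
Qed.
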